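(* Let $n\ge2$ and let $A\in\mathbb{R}^{n\times n}$ be conditionally negative definite. Let $\overline{A}=\frac12(A+A^T)$ and let $\lambda_2$ be the second largest eigenvalue (counting multiplicity) of $$D=\overline{A}-\frac1n\overline{A}\mathbf{1}\mathbf{1}^T-\frac1n\mathbf{1}\mathbf{1}^T\overline{A}+\frac{\mathbf{1}^TA\mathbf{1}}{n^2}\mathbf{1}\mathbf{1}^T.$$ Then $$\max_{\mathbf{x}\in\mathbb{R}^n,\ \mathbf{x}^T\mathbf{1}=0,\ \mathbf{x}\ne\mathbf{0}}\frac{\mathbf{x}^TA\mathbf{x}}{\mathbf{x}^T\mathbf{x}}=\lambda_2<0.$$
   Context: $\mathbf{1}\in\mathbb{R}^n$ is the all-ones vector. $A$ is conditionally negative definite if $\mathbf{y}^TA\mathbf{y}<0$ for all nonzero $\mathbf{y}\in\mathbb{R}^n$ with $\mathbf{1}^T\mathbf{y}=0$. *)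

From HB Require Import structures.
From mathcomp Require Import all_boot all_order all_algebra.
Set Implicit Arguments.
Unset Strict Implicit.
Unset Printing Implicit Defensive.
Import Order.TTheory GRing.Theory Num.Theory.
Local Open Scope ring_scope.

Definition ones (R : ringType) (n : nat) : 'cV[R]_n := const_mx 1.

Definition qform (R : ringType) (n : nat) (A : 'M[R]_n) (y : 'cV[R]_n) : R :=
  (y^T *m A *m y) 0 0.

Definition cond_neg_def (R : realDomainType) (n : nat) (A : 'M[R]_n) : Prop :=
  forall y : 'cV[R]_n, y != 0 -> (ones R n)^T *m y = 0 -> qform A y < 0.

Definition symm_part (R : fieldType) (n : nat) (A : 'M[R]_n) : 'M[R]_n :=
  (2%:R)^-1 *: (A + A^T).

Definition Dmat (R : fieldType) (n : nat) (A : 'M[R]_n) : 'M[R]_n :=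
  let Ab := symm_part A in
  let J := ones R n *m (ones R n)^T in
  Ab - (n%:R)^-1 *: (Ab *m J) - (n%:R)^-1 *: (J *m Ab)
     + ((((ones R n)^T *m A *m ones R n) 0 0) / (n%:R ^+ 2)) *: J.

(* s is the list of eigenvalues of M counted with (algebraic) multiplicity:
   the characteristic polynomial of M splits as prod_(x <- s) (X - x). *)
Definition eigenvalues_list (R : comRingType) (n : nat) (M : 'M[R]_n)
  (s : seq R) : Prop :=
  char_poly M = \prod_(x <- s) ('X - x%:P).

Definition second_largest (R : realDomainType) (s : seq R) : R :=
  nth 0 (sort (>=%R) s) 1.

(* On the hyperplane 1^perp the quadratic forms of A and of the symmetric
   matrix D coincide, and D 1 = 0.  Diagonalise D by a unitary matrix over
   R[i].  As D is negative definite on 1^perp, at most one eigenvalue of D is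
   nonnegative, since some nonzero combination of two eigenvectors lies in
   1^perp.  The eigenvalue 0 of the eigenvector 1 is therefore that one and all
   the others are negative; 1 has no component along their eigenvectors, so a
   vector of 1^perp has none along the 0-eigenvector.  Its Rayleigh quotient is
   thus at most the largest negative eigenvalue lambda2, which is attained at a
   lambda2-eigenvector, orthogonal to 1 because lambda2 <> 0. *)

From HB Require Import structures.
From mathcomp Require Import all_boot all_order all_algebra.
From mathcomp Require Import complex spectral sesquilinear ring lra.
Import Order.TTheory GRing.Theory Num.Theory.
Set Implicit Arguments.
Unset Strict Implicit.
Unset Printing Implicit Defensive.
Local Open Scope ring_scope.
Local Open Scope sesquilinear_scope.

Local Notation toC := (real_complex _).
Local Notation MtoC := (map_mx toC).

Lemma onesT_mul (R : comRingType) n (x : 'cV[R]_n) :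
  (ones R n)^T *m x = (x^T *m ones R n)^T.
Proof. by rewrite trmx_mul trmxK. Qed.

Lemma qform_trmx (R : comRingType) n (A : 'M[R]_n) y :
  qform A^T y = qform A y.
Proof.
rewrite /qform.
have -> : y^T *m A^T *m y = (y^T *m A *m y)^T.
  by rewrite !trmx_mul trmxK mulmxA.
by rewrite mxE.
Qed.

Lemma qform_symm_part (R : numFieldType) n (A : 'M[R]_n) y :
  qform (symm_part A) y = qform A y.
Proof.
rewrite /qform /symm_part -scalemxAr -scalemxAl mxE mulmxDr mulmxDl mxE.
rewrite -/(qform A y) -/(qform A^T y) qform_trmx.
by field.
Qed.

Lemma symm_part_sym (R : fieldType) n (A : 'M[R]_n) :
  (symm_part A)^T = symm_part A.
Proof. by rewrite /symm_part linearZ /= linearD /= trmxK addrC. Qed.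

Lemma Dmat_sym (R : fieldType) n (A : 'M[R]_n) : (Dmat A)^T = Dmat A.
Proof.
have J_sym : (ones R n *m (ones R n)^T)^T = ones R n *m (ones R n)^T.
  by rewrite trmx_mul trmxK.
rewrite /Dmat; move: (symm_part_sym A) J_sym.
move: (symm_part A) (ones R n *m _) => Ab J Ab_sym J_sym.
rewrite !linearD /= !linearN /= !linearZ /= !trmx_mul Ab_sym J_sym.
by congr (_ + _); rewrite addrAC.
Qed.

Lemma qform_Dmat (R : numFieldType) n (A : 'M[R]_n) y :
  (ones R n)^T *m y = 0 -> qform (Dmat A) y = qform A y.
Proof.
move=> y1; have y1' : y^T *m ones R n = 0.
  by apply: trmx_inj; rewrite -onesT_mul y1 trmx0.
rewrite -qform_symm_part /qform /Dmat; move: (symm_part A) => Ab.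
rewrite !(mulmxDr, mulmxN, mulmxDl, mulNmx, =^~ scalemxAr, =^~ scalemxAl).
by rewrite !mulmxA y1' !mul0mx -!mulmxA y1 !mulmx0 !scaler0 !oppr0 !addr0.
Qed.

Lemma Dmat_ones (R : numFieldType) n (A : 'M[R]_n) : (0 < n)%N ->
  Dmat A *m ones R n = 0.
Proof.
move=> n_gt0; have n_neq0 : (n%:R : R) != 0 by rewrite pnatr_eq0 -lt0n.
have onesTones : (ones R n)^T *m ones R n = (n%:R)%:M.
  apply/matrixP => i j; rewrite !ord1 !mxE.
  under eq_bigr do rewrite !mxE mulr1.
  by rewrite sumr_const card_ord.
set q := ((ones R n)^T *m A *m ones R n) 0 0.
have quad : (ones R n)^T *m (symm_part A *m ones R n) = q%:M.
  rewrite mulmxA [LHS]mx11_scalar.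
  by rewrite -/(qform (symm_part A) (ones R n)) qform_symm_part.
rewrite /Dmat -/q; move: (symm_part A) quad => Ab quad.
rewrite !(mulmxDl, mulNmx, =^~ scalemxAl) -!mulmxA onesTones quad.
rewrite !mul_mx_scalar !scalerA.
have -> : q / n%:R ^+ 2 * n%:R = n%:R^-1 * q by field.
by rewrite -scalemxAr scalerA mulVf // scale1r subrr sub0r addNr.
Qed.

Lemma cond_neg_def_Dmat (R : realFieldType) n (A : 'M[R]_n) :
  cond_neg_def A -> cond_neg_def (Dmat A).
Proof. by move=> A_cnd y y_neq0 y1; rewrite qform_Dmat // A_cnd. Qed.

Lemma trmx_mulmx_gt0 (R : realDomainType) n (x : 'cV[R]_n) :
  x != 0 -> 0 < (x^T *m x) 0 0.
Proof.
move=> /matrix0Pn[k [j xk_neq0]]; rewrite ord1 in xk_neq0.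
rewrite mxE (bigD1 k) //= ltr_pwDl ?sumr_ge0 // => [|i _]; rewrite mxE.
  by rewrite lt0r sqrf_eq0 xk_neq0 sqr_ge0.
by rewrite sqr_ge0.
Qed.

Lemma qform_eigenvector (R : comRingType) n (M : 'M[R]_n) (v : 'rV[R]_n) a :
  v *m M = a *: v -> qform M v^T = a * (v *m v^T) 0 0.
Proof. by move=> vM; rewrite /qform trmxK vM -scalemxAl mxE. Qed.

Lemma eigenvector_mul_kernel (R : fieldType) n (M : 'M[R]_n) (v : 'rV[R]_n)
    (c : 'cV[R]_n) a :
  v *m M = a *: v -> a != 0 -> M *m c = 0 -> v *m c = 0.
Proof.
move=> vM a_neq0 Mc; have : a *: (v *m c) = 0.
  by rewrite scalemxAl -vM -mulmxA Mc mulmx0.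
by move/eqP; rewrite scaler_eq0 (negPf a_neq0) => /eqP.
Qed.

Lemma second_largest_perm (R : realDomainType) (x0 : R) (s' s : seq R) :
  perm_eq s (x0 :: s') -> s' != [::] -> all (fun y => y < x0) s' ->
  second_largest s \in s' /\ {in s', forall y, y <= second_largest s}.
Proof.
move=> s_perm s'_neq s'_lt.
have ge_trans : transitive (>=%R : rel R).
  by move=> y x z xy yz; exact: le_trans yz xy.
have : sorted >=%R (sort >=%R s).
  by apply: sort_sorted => x y; exact: le_total.
rewrite -(perm_sort >=%R) in s_perm; move: s_perm.
rewrite /second_largest; case: (sort _ _) => [|t0 [|t1 t]] /=.
- by move/perm_size.
- by move/perm_size => [] /esym/eqP; rewrite size_eq0 (negPf s'_neq).
move=> t_perm /andP[t01 t1_path].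
have t0_max : all (>=%R t0) (t1 :: t).
  by apply: (order_path_min ge_trans); rewrite /= t01.
have t0E : t0 = x0.
  apply/le_anti/andP; split.
    have : t0 \in x0 :: s' by rewrite -(perm_mem t_perm) mem_head.
    by rewrite inE => /predU1P[->//|/(allP s'_lt)/ltW].
  have : x0 \in t0 :: t1 :: t by rewrite (perm_mem t_perm) mem_head.
  by rewrite inE => /predU1P[->//|/(allP t0_max)].
rewrite t0E perm_cons in t_perm.
split; first by rewrite -(perm_mem t_perm) mem_head.
move=> y; rewrite -(perm_mem t_perm) inE => /predU1P[->//|].
exact: (allP (order_path_min ge_trans t1_path)).
Qed.

Lemma second_largest_spectrum (R : realFieldType) n (eig : 'I_n -> R)
    (k0 : 'I_n) (s : seq R) :
  (1 < n)%N -> \prod_(x <- s) ('X - x%:P) = \prod_k ('X - (eig k)%:P) ->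
  (forall k, k != k0 -> eig k < eig k0) ->
  [/\ second_largest s \in s, second_largest s < eig k0
    & forall k, k != k0 -> eig k <= second_largest s].
Proof.
move=> n_gt1 s_eig eig_lt; set s' := [seq eig k | k <- rem k0 (enum 'I_n)].
have mem_rem_k0 k : k \in rem k0 (enum 'I_n) = (k != k0).
  by rewrite mem_rem_uniq ?enum_uniq // inE mem_enum andbT.
have s_perm : perm_eq s (eig k0 :: s').
  have : perm_eq s [seq eig k | k <- enum 'I_n].
    by apply: prod_XsubC_eq; rewrite s_eig big_map big_enum.
  move/perm_trans; apply.
  by rewrite /s' -map_cons perm_map // perm_to_rem ?mem_enum.
have s'_lt : all (fun y => y < eig k0) s'.
  by apply/allP => y /mapP[k]; rewrite mem_rem_k0 => kk0 ->; exact: eig_lt.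
have s'_neq : s' != [::].
  rewrite -size_eq0 size_map size_rem ?mem_enum // size_enum_ord.
  by rewrite -(subnKC n_gt1).
have [l2_s' l2_max] := second_largest_perm s_perm s'_neq s'_lt.
split=> [|| k kk0]; last by apply/l2_max/map_f; rewrite mem_rem_k0.
  by rewrite (perm_mem s_perm) inE l2_s' orbT.
exact: (allP s'_lt).
Qed.

Lemma char_poly_similar (F : fieldType) n (P M : 'M[F]_n) : P \in unitmx ->
  char_poly (invmx P *m M *m P) = char_poly M.
Proof.
move=> P_unit; rewrite /char_poly /char_poly_mx.
set Q := map_mx polyC (invmx P); set Pp := map_mx polyC P.
have QP : Q *m Pp = 1%:M by rewrite -map_mxM mulVmx // map_mx1.
have XE : 'X%:M = Q *m 'X%:M *m Pp :> 'M[{poly F}]_n.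
  by rewrite -mulmxA -scalar_mxC mulmxA QP mul1mx.
rewrite {1}XE.
rewrite !map_mxM -/Q -/Pp -mulmxBl -mulmxBr !det_mulmx mulrAC -det_mulmx QP.
by rewrite det1 mul1r.
Qed.

Section HermitianForm.
Variables (C : numClosedFieldType) (n : nat).

Definition hform (M : 'M[C]_n) (z : 'rV[C]_n) : C := (z *m M *m z ^t*) 0 0.

Lemma hform_diag (d z : 'rV[C]_n) :
  hform (diag_mx d) z = \sum_k d 0 k * (z 0 k * (z 0 k)^*).
Proof.
rewrite /hform mul_mx_diag mxE.
by apply: eq_bigr => k _; rewrite !mxE mulrAC mulrC.
Qed.

Lemma hform_conj (P M : 'M[C]_n) z :
  hform (P ^t* *m M *m P) z = hform M (z *m P ^t*).
Proof. by rewrite /hform trmx_mul map_mxM trmxCK !mulmxA. Qed.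

Lemma hform_normal (M : 'M[C]_n) z (w := z *m (spectralmx M) ^t*) :
  M \is normalmx ->
  hform M z = \sum_k spectral_diag M 0 k * (w 0 k * (w 0 k)^*).
Proof.
move=> /orthomx_spectralP {1}->.
by rewrite invmx_unitary ?spectral_unitarymx // hform_conj hform_diag.
Qed.

Lemma hform1_unitary (P : 'M[C]_n) z (w := z *m P ^t*) :
  P \is unitarymx -> hform 1%:M z = \sum_k w 0 k * (w 0 k)^*.
Proof.
move=> P_unitary; have -> : 1%:M = P ^t* *m 1%:M *m P :> 'M[C]_n.
  by rewrite mulmx1 -[LHS](mulmxKtV 1%:M P_unitary) // mul1mx.
rewrite hform_conj -diag_const_mx hform_diag.
by apply: eq_bigr => k _; rewrite mxE mul1r.
Qed.

Lemma char_poly_normal (M : 'M[C]_n) : M \is normalmx ->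
  char_poly M = \prod_k ('X - (spectral_diag M 0 k)%:P).
Proof.
move=> /orthomx_spectralP {1}->.
rewrite char_poly_similar ?spectral_unit // char_poly_trig ?diag_mx_is_trig //.
by apply: eq_bigr => k _; rewrite mxE eqxx mulr1n.
Qed.

End HermitianForm.

Section NegativeOnHyperplane.
Variables (C : numClosedFieldType) (n : nat) (H : 'M[C]_n) (c : 'cV[C]_n).
Hypothesis H_herm : H \is hermsymmx.
Hypothesis Hc : H *m c = 0.
Hypothesis H_neg : forall z, z != 0 -> z *m c = 0 -> hform H z < 0.

Local Notation P := (spectralmx H).
Local Notation d k := (spectral_diag H 0 k).
(* H = P^t* diag P with P unitary: Pc lists the coordinates of c in the
   orthonormal eigenbasis formed by the columns of P^t*. *)
Local Notation Pc := (P *m c).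

Let P_unitary : P \is unitarymx. Proof. exact: spectral_unitarymx. Qed.
Let H_normal : H \is normalmx. Proof. exact: hermitian_normalmx. Qed.

Lemma spectral_diag_real k : d k \is Num.real.
Proof. exact/mxOverP/hermitian_spectral_diag_real. Qed.

Lemma spectral_diag_mulPc k : d k * Pc k 0 = 0.
Proof.
have : diag_mx (spectral_diag H) *m Pc = 0.
  have /orthomx_spectralP HE := H_normal; rewrite invmx_unitary // in HE.
  have PH : P *m (P ^t* *m diag_mx (spectral_diag H) *m P) =
             diag_mx (spectral_diag H) *m P.
    by rewrite !mulmxA (unitarymxP P_unitary) mul1mx.
  rewrite -HE in PH.
  by rewrite mulmxA -PH -mulmxA Hc mulmx0.
by move=> /matrixP/(_ k 0); rewrite mul_diag_mx !mxE.
Qed.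

Lemma nonneg_spectral_diag_uniq k l : 0 <= d k -> 0 <= d l -> k = l.
Proof.
move=> dk_ge0 dl_ge0; apply/eqP; apply: contraT => kl.
(* The combination w of the k-th and l-th eigenvectors is orthogonal to c,
   yet the form is nonnegative on it. *)
have [al [be [al_be ab_neq0]]] :
    exists al be, al * Pc k 0 = be * Pc l 0 /\ (al != 0) || (be != 0).
  have [ck0|ck_neq0] := eqVneq (Pc k 0) 0.
    by exists 1, 0; rewrite ck0 !mul0r mulr0 oner_neq0.
  by exists (Pc l 0), (Pc k 0); rewrite mulrC ck_neq0 orbT.
pose w : 'rV[C]_n := al *: delta_mx 0 k - be *: delta_mx 0 l.
have wE m : w 0 m = al * (m == k)%:R - be * (m == l)%:R.
  by rewrite !mxE.
have w_neq0 : w != 0.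
  have wk : w 0 k = al by rewrite wE eqxx (negPf kl) mulr1 mulr0 subr0.
  have wl : w 0 l = - be by rewrite wE eqxx eq_sym (negPf kl) mulr1 mulr0 sub0r.
  apply: contraTneq ab_neq0 => w0.
  by rewrite negb_or !negbK -[al]wk -[be]opprK -wl w0 !mxE oppr0 eqxx.
have wPK : w *m P *m P ^t* = w by rewrite mulmxtVK.
have z_neq0 : w *m P != 0.
  by apply: contra w_neq0 => /eqP z0; rewrite -wPK z0 mul0mx.
have z_orth : w *m P *m c = 0.
  rewrite -mulmxA mulmxBl -!scalemxAl -!rowE.
  move: (P *m c) al_be => c' al_be.
  by apply/matrixP => i j; rewrite !ord1 !mxE al_be subrr.
suff : 0 <= hform H (w *m P) by rewrite (lt_geF (H_neg z_neq0 z_orth)).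
rewrite hform_normal // wPK; apply: sumr_ge0 => m _; rewrite wE.
have [->|mk] := eqVneq m k; first by rewrite mulr_ge0 ?mul_conjC_ge0.
have [->|ml] := eqVneq m l; first by rewrite mulr_ge0 ?mul_conjC_ge0.
by rewrite !mulr0 subr0 mul0r mulr0.
Qed.

Variable k0 : 'I_n.
Hypothesis Pc_k0 : Pc k0 0 != 0.

Lemma spectral_diag_k0 : d k0 = 0.
Proof.
have /eqP := spectral_diag_mulPc k0.
by rewrite mulf_eq0 (negPf Pc_k0) orbF => /eqP.
Qed.

Lemma spectral_diag_neg k : k != k0 -> d k < 0.
Proof.
move=> kk0; rewrite real_ltNge ?spectral_diag_real ?real0 //.
apply: contra kk0 => dk_ge0; apply/eqP/nonneg_spectral_diag_uniq => //.
by rewrite spectral_diag_k0.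
Qed.

Lemma Pc_eq0 k : k != k0 -> Pc k 0 = 0.
Proof.
move=> kk0; have /eqP := spectral_diag_mulPc k.
by rewrite mulf_eq0 (lt_eqF (spectral_diag_neg kk0)) => /eqP.
Qed.

Lemma orth_eigencoord_k0 (z : 'rV[C]_n) :
  z *m c = 0 -> (z *m P ^t*) 0 k0 = 0.
Proof.
move=> zc; have : (z *m P ^t* *m Pc) 0 0 = 0.
  by rewrite mulmxA mulmxKtV // zc mxE.
rewrite mxE (bigD1 k0) //= big1 => [|k kk0]; last by rewrite Pc_eq0 ?mulr0.
by rewrite addr0 => /eqP; rewrite mulf_eq0 (negPf Pc_k0) orbF => /eqP.
Qed.

Lemma hform_le_orth z t : z *m c = 0 -> (forall k, k != k0 -> d k <= t) ->
  hform H z <= t * hform 1%:M z.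
Proof.
move=> zc dt; rewrite hform_normal // (hform1_unitary z P_unitary) mulr_sumr.
apply: ler_sum => k _; have [->|kk0] := eqVneq k k0.
  by rewrite orth_eigencoord_k0 // mul0r !mulr0.
by rewrite ler_wpM2r ?mul_conjC_ge0 ?dt.
Qed.

End NegativeOnHyperplane.

Section ComplexifiedRealMatrix.
Variables (R : rcfType) (n : nat).

Lemma conj_mxC m p (B : 'M[R]_(m, p)) : (MtoC B) ^t* = MtoC B^T.
Proof. by apply/matrixP => i j; rewrite !mxE; exact: conjc_real. Qed.

Lemma hform_mxC (M : 'M[R]_n) y :
  hform (MtoC M) (MtoC y^T) = toC (qform M y).
Proof. by rewrite /hform /qform conj_mxC trmxK -!map_mxM mxE. Qed.

Lemma mxC_rect m p (Z : 'M[R[i]]_(m, p)) :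
  Z = MtoC (map_mx (@complex.Re R) Z) + 'i *: MtoC (map_mx (@complex.Im R) Z).
Proof. by apply/matrixP => i j; rewrite !mxE -complexiE -complexE. Qed.

Lemma mxC_rect_eq0 m p (X Y : 'M[R]_(m, p)) :
  MtoC X + 'i *: MtoC Y = 0 -> X = 0 /\ Y = 0.
Proof.
move=> /matrixP XY; suff XYij i j : X i j = 0 /\ Y i j = 0.
  by split; apply/matrixP => i j; rewrite mxE; case: (XYij i j).
have := XY i j; rewrite !mxE -complexiE => /eqP; rewrite eq_complex /=.
by rewrite !(mul0r, mul1r, subr0, addr0, add0r) => /andP[/eqP-> /eqP->].
Qed.

Lemma conj_mxC_rect m p (X Y : 'M[R]_(m, p)) :
  (MtoC X + 'i *: MtoC Y) ^t* = MtoC X^T - 'i *: MtoC Y^T.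
Proof.
have realC (x : R) : toC x \is Num.real by rewrite complex_real.
by apply/matrixP => i j; rewrite !mxE conjC_rect.
Qed.

Lemma hform_mxC_rect (M : 'M[R]_n) z : M^T = M ->
  hform (MtoC M) z =
  toC (qform M (map_mx (@complex.Re R) z)^T +
       qform M (map_mx (@complex.Im R) z)^T).
Proof.
move=> M_sym; set a := map_mx _ z; set b := map_mx _ z.
have cross : b *m M *m a^T = a *m M *m b^T.
  have -> : b *m M *m a^T = (a *m M *m b^T)^T.
    by rewrite !trmx_mul trmxK M_sym mulmxA.
  by apply/matrixP => i j; rewrite !ord1 mxE.
rewrite /hform /qform !trmxK {1 2}(mxC_rect z) -/a -/b conj_mxC_rect.
rewrite !(mulmxDl, mulmxDr, mulmxN, =^~ scalemxAl, =^~ scalemxAr).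
rewrite -!map_mxM cross.
move: (a *m M *m a^T) (a *m M *m b^T) (b *m M *m b^T) => p q r.
by rewrite !mxE rmorphD mulrN mulrA -expr2 sqrCi mulN1r opprK addrA addrK.
Qed.

Lemma qform_orth_le0 (M : 'M[R]_n) x : cond_neg_def M ->
  (ones R n)^T *m x = 0 -> qform M x <= 0.
Proof.
move=> M_cnd x1; have [->|x_neq0] := eqVneq x 0; last exact/ltW/M_cnd.
by rewrite /qform trmx0 !mul0mx mxE.
Qed.

Lemma cond_neg_def_mxC (M : 'M[R]_n) z : M^T = M -> cond_neg_def M ->
  z != 0 -> z *m ones R[i] n = 0 -> hform (MtoC M) z < 0.
Proof.
move=> M_sym M_cnd z_neq0 z1; rewrite hform_mxC_rect //.
set a := map_mx _ z; set b := map_mx _ z.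
have orth (x : 'rV[R]_n) : x *m ones R n = 0 -> (ones R n)^T *m x^T = 0.
  by move=> x1; rewrite -trmx_mul x1 trmx0.
have [/orth a1 /orth b1] : a *m ones R n = 0 /\ b *m ones R n = 0.
  apply: mxC_rect_eq0.
  rewrite !map_mxM scalemxAl -mulmxDl -mxC_rect -[RHS]z1.
  by congr (_ *m _); apply/matrixP => i j; rewrite !mxE.
rewrite -[X in _ < X]/(toC 0) ltcR.
have [a0|a_neq0] := eqVneq a 0.
  have b_neq0 : b^T != 0.
    apply: contra z_neq0; rewrite trmx_eq0 => /eqP b0.
    by rewrite (mxC_rect z) -/a -/b a0 b0 !map_mx0 scaler0 addr0.
  by have := qform_orth_le0 M_cnd a1; have := M_cnd _ b_neq0 b1; lra.
rewrite -trmx_eq0 in a_neq0.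
by have := M_cnd _ a_neq0 a1; have := qform_orth_le0 M_cnd b1; lra.
Qed.

End ComplexifiedRealMatrix.

Lemma cond_neg_def_kernel_spectrum (R : rcfType) n (M : 'M[R]_n) :
  (0 < n)%N -> M^T = M -> M *m ones R n = 0 -> cond_neg_def M ->
  exists (eig : 'I_n -> R) (k0 : 'I_n),
  [/\ char_poly M = \prod_k ('X - (eig k)%:P), eig k0 = 0,
      forall k, k != k0 -> eig k < 0
    & forall x t, x^T *m ones R n = 0 -> (forall k, k != k0 -> eig k <= t) ->
        qform M x <= t * (x^T *m x) 0 0].
Proof.
move=> n_gt0 M_sym M1 M_cnd; set H := MtoC M.
have H_herm : H \is hermsymmx.
  by rewrite is_hermitianmxE expr0 scale1r conj_mxC M_sym.
have onesC : ones R[i] n = MtoC (ones R n) by apply/matrixP => i j; rewrite !mxE.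
have H1 : H *m ones R[i] n = 0 by rewrite onesC -map_mxM M1 map_mx0.
have H_neg z := @cond_neg_def_mxC R n M z M_sym M_cnd.
pose eig k := complex.Re (spectral_diag H 0 k).
have eigE k : toC (eig k) = spectral_diag H 0 k.
  exact/RRe_real/(spectral_diag_real H_herm).
(* The coordinate of 1 along some eigenvector is nonzero; its eigenvalue
   must be 0. *)
have [k0 [j Pc_k0]] : exists k0 j, (spectralmx H *m ones R[i] n) k0 j != 0.
  apply/matrix0Pn; apply: contraNneq (oner_neq0 R[i]) => P1.
  have : ones R[i] n = 0 by rewrite -[LHS](mulKmx (spectral_unit H)) P1 mulmx0.
  by move/matrixP/(_ (Ordinal n_gt0) 0); rewrite !mxE => ->.
rewrite ord1 in Pc_k0.
exists eig, k0; split.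
- apply: (@map_poly_inj _ _ toC); rewrite map_char_poly rmorph_prod.
  rewrite (char_poly_normal (hermitian_normalmx H_herm)).
  by apply: eq_bigr => k _ /=; rewrite map_polyXsubC -eigE.
- by apply: complexI; rewrite eigE (spectral_diag_k0 H_herm H1 Pc_k0).
- move=> k kk0; rewrite -ltcR eigE.
  exact: (spectral_diag_neg H_herm H1 H_neg Pc_k0).
move=> x t x1 eig_le.
have xC1 : MtoC x^T *m ones R[i] n = 0 by rewrite onesC -map_mxM x1 map_mx0.
have eig_leC k : k != k0 -> spectral_diag H 0 k <= toC t.
  by move=> kk0; rewrite -eigE lecR eig_le.
have := hform_le_orth H_herm H1 H_neg Pc_k0 xC1 eig_leC.
rewrite hform_mxC -(map_mx1 toC) hform_mxC -rmorphM lecR.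
by rewrite /qform mulmx1.
Qed.

Theorem lemma2p1 (R : rcfType) (n : nat) (A : 'M[R]_n) :
  (2 <= n)%N -> cond_neg_def A ->
  (exists s : seq R, eigenvalues_list (Dmat A) s) /\
  (forall s : seq R, eigenvalues_list (Dmat A) s ->
     let lambda2 := second_largest s in
     [/\ (forall x : 'cV[R]_n, x != 0 -> x^T *m ones R n = 0 ->
            qform A x / (x^T *m x) 0 0 <= lambda2),
         (exists2 x : 'cV[R]_n, x != 0 /\ x^T *m ones R n = 0 &
            qform A x / (x^T *m x) 0 0 = lambda2)
       & lambda2 < 0]).
Proof.
move=> n_ge2 A_cnd; have n_gt0 : (0 < n)%N by apply: ltnW.
have D1 := Dmat_ones A n_gt0.
have [eig [k0 [charD eig_k0 eig_neg rayleigh]]] :=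
  cond_neg_def_kernel_spectrum n_gt0 (Dmat_sym A) D1 (cond_neg_def_Dmat A_cnd).
split=> [|s s_eig lambda2].
  exists [seq eig k | k <- enum 'I_n].
  by rewrite /eigenvalues_list big_map big_enum.
have eig_lt k : k != k0 -> eig k < eig k0 by rewrite eig_k0; exact: eig_neg.
have [l2_s l2_neg l2_max] :=
  second_largest_spectrum n_ge2 (etrans (esym s_eig) charD) eig_lt.
rewrite eig_k0 in l2_neg; split=> //.
  move=> x x_neq0 x1; rewrite ler_pdivrMr ?trmx_mulmx_gt0 //.
  by rewrite -qform_Dmat ?onesT_mul ?x1 ?trmx0 //; apply: rayleigh x1 l2_max.
have /eigenvalueP[v vD v_neq0] : eigenvalue (Dmat A) lambda2.
  by rewrite eigenvalue_root_char s_eig root_prod_XsubC.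
have v1 := eigenvector_mul_kernel vD (ltr0_neq0 l2_neg) D1.
exists v^T; first by rewrite trmx_eq0 trmxK.
rewrite -qform_Dmat ?onesT_mul ?trmxK ?v1 ?trmx0 // (qform_eigenvector vD).
by rewrite mulfK // gt_eqF // -[v in v *m _]trmxK trmx_mulmx_gt0 ?trmx_eq0.
Qed.
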